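(* Let $F(x_1,x_2,\dots)$ be a solution of the dKP hierarchy, i.e. the quantities $H^i_m(x):=-\frac1m\frac{\partial^2F}{\partial x_i\partial x_m}$ ($i,m\ge1$) satisfy, for all $j,k,m\ge1$, $$H^{j+k}_m-H^j_{m+k}-H^k_{j+m}+\sum_{l=1}^{j-1}H^k_{j-l}H^l_m+\sum_{l=1}^{k-1}H^j_{k-l}H^l_m-\sum_{l=1}^{m-1}H^k_{m-l}H^j_l=0,$$ and put $u_k=H^1_k$ (with $u_k:=0$ for $k\le0$). For fixed $x$, let $A_x$ be the span of the formal Laurent series $p_0=1$, $p_i(z)=z^i+\sum_{k\ge1}H^i_k(x)z^{-k}$ ($i\ge1$), a commutative associative algebra under pointwise multiplication. Define the bilinear map $\psi:A_x\times A_x\to A_x$ by $$\psi(p_j,p_k)=\sum_{l\ge0}\Big(\frac{\partial u_{j-l}}{\partial x_k}+\frac{\partial u_{k-l}}{\partial x_j}\Big)p_l .$$ Then $\psi$ is a Hochschild 2-cocycle, i.e. $\alpha\psi(\beta,\gamma)-\psi(\alpha\beta,\gamma)+\psi(\alpha,\beta\gamma)-\gamma\psi(\alpha,\beta)=0$ for all $\alpha,\beta,\gamma\in A_x$, and a 2-coboundary, i.e. there is a linear map $g$ from $A_x$ into the $A_x$-module of formal Laurent series in $z$ such that $\psi(\alpha,\beta)=\alpha g(\beta)+\beta g(\alpha)-g(\alpha\beta)$ for all $\alpha,\beta\in A_x$.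
   Context: The displayed constraints are exactly the condition that $A_x$ is closed under multiplication, with $p_jp_k=\sum_l C^l_{jk}p_l$, $C^l_{jk}=\delta^l_{j+k}+H^k_{j-l}+H^j_{k-l}$ (with $H^a_b=0$ for $b\le0$). The dKP hierarchy is, by definition here, the system of these constraints for $H^i_m=-\frac1m\partial_{x_i}\partial_{x_m}F$ (dispersionless Hirota–Miwa equations). The 2-cocycle/2-coboundary notions are those of Hochschild (Harrison) cohomology of the commutative algebra $A_x$. *)

From HB Require Import structures.
From mathcomp Require Import all_boot all_order all_algebra.
From mathcomp Require Import all_classical all_reals all_analysis.
Set Implicit Arguments. Unset Strict Implicit. Unset Printing Implicit Defensive.
Import Order.TTheory GRing.Theory Num.Theory.
Local Open Scope ring_scope.

Section DKP.
Variable R : realType.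

(** ** Formal Laurent series in z with finitely many positive powers:
    coefficient of z^n is [lco f n]; vanishes above [ltop f]. *)
Record lser := LSer {
  ltop : int;
  lco : int -> R;
  lser_bnd : forall n : int, ltop < n -> lco n = 0 }.

Definition ls_eq (f g : lser) := forall n : int, lco f n = lco g n.

Definition ls_zero : lser := @LSer 0 (fun _ => 0) (fun _ _ => erefl).

Program Definition ls_add (f g : lser) : lser :=
  @LSer (Num.max (ltop f) (ltop g)) (fun n => lco f n + lco g n) _.
Next Obligation.
move=> f g n; rewrite gt_max => /andP[H1 H2].
by rewrite /= (lser_bnd H1) (lser_bnd H2) addr0.
Qed.

Program Definition ls_scale (c : R) (f : lser) : lser :=
  @LSer (ltop f) (fun n => c * lco f n) _.
Next Obligation. by move=> c f n H /=; rewrite (lser_bnd H) mulr0. Qed.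

Definition ls_opp (f : lser) : lser := ls_scale (-1) f.

(** Cauchy product: coefficient of z^n is the (finite) sum of
    f_a g_b over a + b = n, a <= ltop f, b <= ltop g. *)
Program Definition ls_mul (f g : lser) : lser :=
  @LSer (ltop f + ltop g)
    (fun n => if n <= ltop f + ltop g then
        \sum_(i < (absz (ltop f + ltop g - n)%R).+1)
           lco f (n - ltop g + i%:Z) * lco g (ltop g - i%:Z)
      else 0) _.
Next Obligation. by move=> f g n H /=; case: ifPn => //; rewrite leNgt H. Qed.

(** ** Infinitely many variables x_1, x_2, ...: a xvar is [x : nat -> R]
    with [x n] the coordinate x_{n+1}. *)
Definition xvar := nat -> R.
Definition shift (x : xvar) (n : nat) (t : R) : xvar :=
  fun m => if m == n then x m + t else x m.

(** [pd i f] = partial derivative of f with respect to x_i (i >= 1);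
    convention: [pd 0 f = 0] (there is no variable x_0). *)
Definition pd (i : nat) (f : xvar -> R) : xvar -> R :=
  fun x => if i is i'.+1 then derive1 (fun t : R => f (shift x i' t)) 0 else 0.

Definition iter_pd (s : seq nat) (f : xvar -> R) : xvar -> R := foldr pd f s.

Definition smooth_F (F : xvar -> R) :=
  (forall (s : seq nat) (i : nat) (x : xvar),
      derivable (fun t : R => iter_pd s F (shift x i t)) 0 1) /\
  (forall (s : seq nat) (i j : nat),
      pd i (pd j (iter_pd s F)) = pd j (pd i (iter_pd s F))).

Definition Hc (F : xvar -> R) (i m : nat) : xvar -> R :=
  fun x => - (m%:R)^-1 * pd i (pd m F) x.

Definition dKP (F : xvar -> R) :=
  forall (x : xvar) (j k m : nat), (0 < j)%N -> (0 < k)%N -> (0 < m)%N ->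
    Hc F (j + k) m x - Hc F j (m + k) x - Hc F k (j + m) x
    + \sum_(1 <= l < j) Hc F k (j - l) x * Hc F l m x
    + \sum_(1 <= l < k) Hc F j (k - l) x * Hc F l m x
    - \sum_(1 <= l < m) Hc F k (m - l) x * Hc F j l x = 0.

(** u_n = H^1_n for n >= 1, u_n = 0 for n <= 0 (nat subtraction truncates) *)
Definition u (F : xvar -> R) (n : nat) : xvar -> R :=
  if n is 0 then fun _ => 0 else Hc F 1 n.

(** elements of A_x are given by coordinate lists a : sum_i a`_i p_i,
    p_0 = 1, p_i = z^i + sum_{k>=1} H^i_k(x) z^{-k}. *)
Program Definition ser (F : xvar -> R) (x : xvar) (a : seq R) : lser :=
  @LSer (size a)%:Z
    (fun n => match n with
              | Posz m => a`_m
              | Negz m => \sum_(1 <= i < size a) a`_i * Hc F i m.+1 x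
              end) _.
Next Obligation.
move=> F x a [m|m] H //=.
by rewrite nth_default // -(@lez_nat) ltW.
Qed.

(** coordinates of psi(p_j, p_k) = sum_l (d u_{j-l}/dx_k + d u_{k-l}/dx_j) p_l
    (terms with l >= max j k vanish since u_{<=0} = 0) *)
Definition psi_basis (F : xvar -> R) (x : xvar) (j k : nat) : seq R :=
  mkseq (fun l => pd k (u F (j - l)) x + pd j (u F (k - l)) x) (maxn j k).

Definition psi (F : xvar -> R) (x : xvar) (a b : seq R) : seq R :=
  mkseq (fun l => \sum_(j < size a) \sum_(k < size b)
                    a`_j * b`_k * (psi_basis F x j k)`_l)
        (maxn (size a) (size b)).

Definition gext (G : nat -> lser) (a : seq R) : lser :=
  foldr (fun i acc => ls_add (ls_scale a`_i (G i)) acc) ls_zero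
        (iota 0 (size a)).

End DKP.

Notation "f =~ g" := (ls_eq f g) (at level 70, no associativity).

From Pilot Require Import Defs.
From HB Require Import structures.
From mathcomp Require Import all_boot all_order all_algebra.
From mathcomp Require Import all_classical all_reals all_analysis.
From mathcomp Require Import zify ring lra.
Set Implicit Arguments. Unset Strict Implicit. Unset Printing Implicit Defensive.
Import Order.TTheory GRing.Theory Num.Theory.
Local Open Scope ring_scope.

(* The numbers C^l_{jk} = δ^l_{j+k} + H^k_{j-l} + H^j_{k-l} are the structure constants
   of A_x: p_j p_k = Σ_l C^l_{jk} p_l, which is immediate at the non-negative powers of z
   and is the dKP equation with m = n at z^(-n).  The identity holds at every point, so
   shifting x_1 and differentiating gives, with g(p_i) := ∂p_i/∂x_1,
     Σ_l (∂_1 C^l_{jk}) p_l = p_j g(p_k) + p_k g(p_j) - g(p_j p_k).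
   Since third derivatives of F commute, ∂_1 H^k_n = ∂_k H^1_n = ∂_k u_n, so ∂_1 C^l_{jk}
   is the coefficient of p_l in ψ(p_j, p_k): ψ is the coboundary of g, and every
   coboundary is a cocycle because the product of series is associative and commutative. *)

Section WindowSums.
Variable R : realType.
Implicit Types (phi : int -> R) (lo : int).

Definition window_sum phi lo (n : nat) : R := \sum_(i < n) phi (lo + i%:Z).

Definition vanishes_off phi lo (n : nat) := forall z, z < lo \/ lo + n%:Z <= z -> phi z = 0.

Lemma window_sum_extend phi lo n l r : vanishes_off phi lo n ->
  window_sum phi (lo - l%:Z) (l + n + r) = window_sum phi lo n.
Proof.
move=> phi0; rewrite /window_sum !big_split_ord /=.
have -> : \sum_(i < r) phi (lo - l%:Z + (l + n + i)%N%:Z) = 0.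
  by apply: big1 => i _; apply: phi0; right; lia.
have -> : \sum_(i < l) phi (lo - l%:Z + i%:Z) = 0.
  by apply: big1 => i _; apply: phi0; left; have := ltn_ord i; lia.
by rewrite add0r addr0; apply: eq_bigr => i _; congr phi; lia.
Qed.

Lemma window_sum_eq phi lo1 n1 lo2 n2 :
  vanishes_off phi lo1 n1 -> vanishes_off phi lo2 n2 ->
  window_sum phi lo1 n1 = window_sum phi lo2 n2.
Proof.
wlog le12 : lo1 n1 lo2 n2 / lo1 <= lo2 => [hwlog|phi1 phi2].
  by case: (lerP lo1 lo2) => h v1 v2; [|symmetry]; apply: hwlog => //; lia.
set d := absz (lo2 - lo1)%R.
rewrite -[LHS](window_sum_extend 0 (d + n2) phi1).
rewrite -(window_sum_extend d n1 phi2); congr window_sum; lia.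
Qed.

End WindowSums.

Section LaurentSeriesProduct.
Variable R : realType.
Implicit Types f g h : lser R.

Definition vanishes_above f (T : int) := forall m, T < m -> lco f m = 0.

Lemma ltop_vanishes f : vanishes_above f (ltop f).
Proof. exact: lser_bnd. Qed.
Arguments ltop_vanishes : clear implicits.

Lemma vanishes_above_le f T T' : T <= T' -> vanishes_above f T -> vanishes_above f T'.
Proof. by move=> le_T f0 m lt_m; apply: f0; lia. Qed.

Lemma lco_mul_window f g T1 T2 t lo n :
  vanishes_above f T1 -> vanishes_above g T2 -> lo <= t - T2 -> T1 < lo + n%:Z ->
  lco (ls_mul f g) t = window_sum (fun i => lco f i * lco g (t - i)) lo n.
Proof.
move=> f0 g0 lo_le n_gt.
transitivity (window_sum (fun i => lco f i * lco g (t - i)) (t - ltop g)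
   (if t <= ltop f + ltop g then (absz (ltop f + ltop g - t)%R).+1 else 0)).
  rewrite /=; case: ifP => _; last by rewrite /window_sum big_ord0.
  by apply: eq_bigr => i _; congr (lco f _ * lco g _); lia.
apply: window_sum_eq => z [z_lt|z_ge].
- by rewrite (ltop_vanishes g) ?mulr0 //; lia.
- by rewrite (ltop_vanishes f) ?mul0r //; move: z_ge; case: ifP; lia.
- by rewrite g0 ?mulr0 //; lia.
- by rewrite f0 ?mul0r //; lia.
Qed.

Lemma vanishes_above_mul f g T1 T2 :
  vanishes_above f T1 -> vanishes_above g T2 -> vanishes_above (ls_mul f g) (T1 + T2).
Proof.
move=> f0 g0 t lt_t.
by rewrite (lco_mul_window (lo := t - T2) (n := 0) f0 g0) 1?/window_sum ?big_ord0 //; lia.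
Qed.

Lemma lco_mul_bounds f g T1 T2 t : vanishes_above f T1 -> vanishes_above g T2 ->
  lco (ls_mul f g) t =
    window_sum (fun i => lco f i * lco g (t - i)) (t - T2) (absz (T1 + T2 - t)%R).+1.
Proof.
by move=> f0 g0; apply: (lco_mul_window f0 g0); have := lez_abs (T1 + T2 - t); lia.
Qed.

Lemma lco_mul_below f g T1 T2 (K : nat) :
  vanishes_above f T1 -> vanishes_above g T2 ->
  lco (ls_mul f g) (T1 + T2 - K%:Z) =
    \sum_(i < K.+1) lco f (T1 - i%:Z) * lco g (T2 - (K - i)%N%:Z).
Proof.
move=> f0 g0; rewrite (lco_mul_window (lo := T1 - K%:Z) (n := K.+1) f0 g0); try lia.
rewrite /window_sum (reindex_inj rev_ord_inj); apply: eq_bigr => i _ /=.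
by have lt_i := ltn_ord i; congr (lco f _ * lco g _); lia.
Qed.

Lemma ls_eq_sym f g : f =~ g -> g =~ f.
Proof. by move=> fg n; rewrite fg. Qed.

Lemma ls_eq_trans f g h : f =~ g -> g =~ h -> f =~ h.
Proof. by move=> fg gh n; rewrite fg gh. Qed.

Lemma lco_add f g n : lco (ls_add f g) n = lco f n + lco g n.
Proof. by []. Qed.

Lemma lco_opp f n : lco (ls_opp f) n = - lco f n.
Proof. by rewrite /= mulN1r. Qed.

Lemma ls_mul_congr f f' g g' : f =~ f' -> g =~ g' -> ls_mul f g =~ ls_mul f' g'.
Proof.
move=> ff' gg' t.
have f'0 : vanishes_above f' (ltop f) by move=> m lt_m; rewrite -ff' lser_bnd.
have g'0 : vanishes_above g' (ltop g) by move=> m lt_m; rewrite -gg' lser_bnd.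
rewrite (lco_mul_bounds _ (ltop_vanishes f) (ltop_vanishes g)) (lco_mul_bounds _ f'0 g'0).
by apply: eq_bigr => i _; rewrite ff' gg'.
Qed.

Lemma ls_mulC f g : ls_mul f g =~ ls_mul g f.
Proof.
move=> t; set lo := t - ltop g; set n := (absz (ltop f - lo)%R).+1.
rewrite (lco_mul_window (lo := lo) (n := n) (ltop_vanishes f) (ltop_vanishes g)); try lia.
rewrite (lco_mul_window (lo := t - lo - n%:Z + 1) (n := n) (ltop_vanishes g) (ltop_vanishes f)); try lia.
rewrite /window_sum (reindex_inj rev_ord_inj); apply: eq_bigr => i _ /=.
by rewrite mulrC; have lt_i := ltn_ord i; congr (lco _ _ * lco _ _); lia.
Qed.

Lemma ls_mul_addr f g h : ls_mul f (ls_add g h) =~ ls_add (ls_mul f g) (ls_mul f h).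
Proof.
move=> t; set M := Num.max (ltop g) (ltop h).
have g0 : vanishes_above g M by apply: vanishes_above_le (ltop_vanishes g); rewrite le_max lexx.
have h0 : vanishes_above h M.
  by apply: vanishes_above_le (ltop_vanishes h); rewrite le_max lexx orbT.
have f0 := ltop_vanishes f; have gh0 : vanishes_above (ls_add g h) M := ltop_vanishes _.
rewrite lco_add (lco_mul_bounds _ f0 gh0) (lco_mul_bounds _ f0 g0) (lco_mul_bounds _ f0 h0).
by rewrite /window_sum -big_split; apply: eq_bigr => i _; rewrite mulrDr.
Qed.

Lemma ls_mul_oppr f g : ls_mul f (ls_opp g) =~ ls_opp (ls_mul f g).
Proof.
move=> t; have [f0 g0] := (ltop_vanishes f, ltop_vanishes g).
have g0' : vanishes_above (ls_opp g) (ltop g) := ltop_vanishes _.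
rewrite lco_opp (lco_mul_bounds _ f0 g0') (lco_mul_bounds _ f0 g0).
by rewrite /window_sum -sumrN; apply: eq_bigr => i _; rewrite lco_opp mulrN.
Qed.

Lemma ls_mulA f g h : ls_mul (ls_mul f g) h =~ ls_mul f (ls_mul g h).
Proof.
move=> t; set lo := t - ltop h; set lo' := lo - ltop g.
set n' := (absz (ltop f - lo')%R).+1; set n := (n' + absz (ltop f + ltop g - lo)%R).+1.
have [[f0 g0] h0] := (ltop_vanishes f, ltop_vanishes g, ltop_vanishes h).
rewrite (lco_mul_window (lo := lo) (n := n) (vanishes_above_mul f0 g0) h0); try lia.
rewrite (lco_mul_window (lo := lo') (n := n') f0 (vanishes_above_mul g0 h0)); try lia.
rewrite /window_sum (eq_bigr (fun i : 'I_n => \sum_(j < n') lco f (lo' + j%:Z) *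
   lco g (lo + i%:Z - (lo' + j%:Z)) * lco h (t - (lo + i%:Z)))) => [|i _]; last first.
  rewrite (lco_mul_window (lo := lo') (n := n') f0 g0); try lia.
  by rewrite mulr_suml.
rewrite exchange_big; apply: eq_bigr => j _; have lt_j := ltn_ord j.
rewrite (lco_mul_window (lo := lo - lo' - j%:Z) (n := n) g0 h0); try lia.
rewrite mulr_sumr; apply: eq_bigr => i _.
by rewrite mulrA; congr (_ * lco g _ * lco h _); lia.
Qed.

End LaurentSeriesProduct.
Arguments ltop_vanishes {R} f.

Section CoboundaryIsCocycle.
Variables (R : realType) (A : Type) (S g : A -> lser R) (psi : A -> A -> A).
Local Notation "f * h" := (ls_mul f h).

Hypothesis S_mul_closed : forall a b, exists ab, S ab =~ S a * S b.
Hypothesis psi_is_coboundary : forall a b ab, S ab =~ S a * S b ->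
  S (psi a b) =~ ls_add (ls_add (S a * g b) (S b * g a)) (ls_opp (g ab)).

Lemma coboundary_cocycle a b c ab bc :
  S ab =~ S a * S b -> S bc =~ S b * S c ->
  ls_add (ls_add (ls_add (S a * S (psi b c)) (ls_opp (S (psi ab c))))
                 (S (psi a bc)))
         (ls_opp (S c * S (psi a b))) =~ ls_zero R.
Proof.
move=> hab hbc t.
have [abc habc] := S_mul_closed ab c.
have habc' : S abc =~ S a * S bc.
  apply: (ls_eq_trans habc); apply: (ls_eq_trans (ls_mul_congr hab (fun=> erefl))).
  by apply: (ls_eq_trans (ls_mulA _ _ _)); apply: ls_mul_congr => //; apply: ls_eq_sym.
have expand f d1 d2 d3 : lco (f * ls_add (ls_add d1 d2) (ls_opp d3)) t =
    lco (f * d1) t + lco (f * d2) t - lco (f * d3) t.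
  by rewrite (ls_mul_addr _ _ _ t) lco_add (ls_mul_addr _ _ _ t) lco_add (ls_mul_oppr _ _ t) lco_opp.
rewrite !lco_add !lco_opp (ls_mul_congr (fun=> erefl) (psi_is_coboundary hbc) t) expand.
rewrite (ls_mul_congr (fun=> erefl) (psi_is_coboundary hab) t) expand.
rewrite (psi_is_coboundary habc t) (psi_is_coboundary habc' t) !lco_add !lco_opp.
have r1 : lco (S ab * g c) t = lco (S a * (S b * g c)) t.
  by rewrite (ls_mul_congr hab (fun=> erefl) t) (ls_mulA _ _ _ t).
have r2 : lco (S bc * g a) t = lco (S c * (S b * g a)) t.
  rewrite (ls_mul_congr hbc (fun=> erefl) t) (ls_mul_congr (ls_mulC _ _) (fun=> erefl) t).
  by rewrite (ls_mulA _ _ _ t).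
have r3 : lco (S a * (S c * g b)) t = lco (S c * (S a * g b)) t.
  rewrite -(ls_mulA _ _ _ t) (ls_mul_congr (ls_mulC _ _) (fun=> erefl) t).
  by rewrite (ls_mulA _ _ _ t).
rewrite r1 r2 r3 /=; lra.
Qed.

End CoboundaryIsCocycle.

Section IndicatorSums.
Variable R : realType.
Implicit Types f : nat -> R.

Lemma sum_mul_eqn (n m : nat) f :
  \sum_(j < n) f j * (j == m :> nat)%:R = if (m < n)%N then f m else 0.
Proof.
elim: n => [|n IH]; first by rewrite big_ord0.
rewrite big_ord_recr /= IH.
case: (ltngtP m n) => cmp_mn /=; case: ifP => lt_m;
  rewrite ?mulr0 ?mulr1 ?addr0 ?add0r ?cmp_mn //; lia.
Qed.

Lemma sum_mul_eqn_rev (K c : nat) f :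
  \sum_(i < K.+1) f i * ((K - i)%N == c)%:R = if (c <= K)%N then f (K - c)%N else 0.
Proof.
rewrite (reindex_inj rev_ord_inj) /=.
rewrite (eq_bigr (fun i : 'I_K.+1 => f (K - i)%N * (i == c :> nat)%:R)) => [|i _].
  by rewrite (sum_mul_eqn K.+1 c (fun i => f (K - i)%N)).
by rewrite subSS subKn // -ltnS.
Qed.

Lemma sum_nat_truncate (a j N : nat) f : (j <= N)%N -> (forall l, (j <= l)%N -> f l = 0) ->
  \sum_(a <= l < N) f l = \sum_(a <= l < j) f l.
Proof.
move=> le_jN f0; case: (leqP a j) => le_aj.
  rewrite (@big_cat_nat _ _ _ j) //= [X in _ + X]big1_seq ?addr0 // => l.
  by rewrite mem_index_iota => /andP[_ /andP[le_jl _]]; exact: f0.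
rewrite [RHS]big_geq 1?ltnW // big1_seq // => l.
by rewrite mem_index_iota => /andP[_ /andP[le_al _]]; apply: f0; lia.
Qed.

Lemma sum_ord_truncate (j N : nat) f : (j <= N)%N -> (forall l, (j <= l)%N -> f l = 0) ->
  \sum_(l < N) f l = \sum_(l < j) f l.
Proof. by move=> le_jN f0; rewrite -!(big_mkord xpredT) (sum_nat_truncate _ le_jN). Qed.

Lemma sum_ord_from1 (j : nat) f : f 0%N = 0 -> \sum_(l < j) f l = \sum_(1 <= l < j) f l.
Proof.
case: j => [|j] f0; first by rewrite big_ord0 big_geq.
by rewrite -(big_mkord xpredT) big_ltn // f0 add0r.
Qed.

End IndicatorSums.

Section StructureConstants.
Variables (R : realType) (F : xvar R -> R) (y : xvar R).

(* [0^-1 = 0] gives H^i_0 = 0; with truncated subtraction on nat this realises the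
   convention H^a_b = 0 for b <= 0. *)
Lemma Hc_lower0 i : Hc F i 0 y = 0.
Proof. by rewrite /Hc invr0 oppr0 mul0r. Qed.

Lemma Hc_upper0 m : Hc F 0 m y = 0.
Proof. by rewrite /Hc /pd mulr0. Qed.

Lemma Hc_lower_le i d l : (d <= l)%N -> Hc F i (d - l) y = 0.
Proof. by rewrite -subn_eq0 => /eqP ->; exact: Hc_lower0. Qed.

(* [pcoef j t] is the coefficient of z^t in p_j and, for j <= T, [pcoef_below j T i]
   that of z^(T-i); [struct_const j k l] is C^l_{jk}. *)
Definition pcoef (j : nat) (t : int) : R :=
  (t == j%:Z)%:R + (if t is Negz m then Hc F j m.+1 y else 0).

Definition pcoef_below (j T i : nat) : R := (i == T - j)%N%:R + Hc F j (i - T) y.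

Definition struct_const (j k l : nat) : R :=
  (l == j + k)%N%:R + Hc F k (j - l) y + Hc F j (k - l) y.

Lemma lco_ser a t : lco (ser F y a) t = \sum_(j < size a) a`_j * pcoef j t.
Proof.
case: t => m /=.
  rewrite (eq_bigr (fun j : 'I_(size a) => a`_j * (j == m :> nat)%:R)) => [|j _].
    by rewrite sum_mul_eqn; case: ltnP => // le_am; rewrite nth_default.
  by rewrite /pcoef addr0 eqz_nat eq_sym.
rewrite (eq_bigr (fun j : 'I_(size a) => a`_j * Hc F j m.+1 y)) => [|j _].
  by rewrite (@sum_ord_from1 _ _ (fun j => a`_j * Hc F j m.+1 y)) // Hc_upper0 mulr0.
by rewrite /pcoef add0r.
Qed.

Lemma pcoef_sub j T i : (j <= T)%N -> pcoef j (T%:Z - i%:Z) = pcoef_below j T i.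
Proof.
move=> le_jT; rewrite /pcoef /pcoef_below.
case E: (T%:Z - i%:Z) => [m|m].
  rewrite (_ : i - T = 0)%N ?Hc_lower0 ?addr0; last by lia.
  by congr (_%:R); apply/eqP; case: eqP; case: eqP => //; lia.
move: E; rewrite NegzE => E.
rewrite (_ : (Negz m == j%:Z) = false) //= add0r.
rewrite (_ : (i == T - j)%N = false) ?add0r; last by apply/eqP; lia.
by congr (Hc F j _ y); lia.
Qed.

Lemma lco_ser_below a T i : (size a <= T.+1)%N ->
  lco (ser F y a) (T%:Z - i%:Z) = \sum_(j < size a) a`_j * pcoef_below j T i.
Proof.
move=> le_aT; rewrite lco_ser; apply: eq_bigr => j _.
by rewrite pcoef_sub //; have := ltn_ord j; lia.
Qed.

End StructureConstants.

Section BasisProduct.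
Variables (R : realType) (F : xvar R -> R) (y : xvar R).
Local Notation H i m := (Hc F i m y).

Lemma pcoef_below_mul_expand j k T1 T2 K :
  \sum_(i < K.+1) pcoef_below F y j T1 i * pcoef_below F y k T2 (K - i) =
    (K == (T1 - j) + (T2 - k))%N%:R + H k (K - (T1 - j) - T2) + H j (K - (T2 - k) - T1)
    + \sum_(i < K.+1) H j (i - T1) * H k (K - i - T2).
Proof.
set d1 := (T1 - j)%N; set d2 := (T2 - k)%N.
have delta_delta : \sum_(i < K.+1) ((K - i)%N == d2)%:R * (i == d1 :> nat)%:R =
    (K == d1 + d2)%N%:R :> R.
  rewrite (sum_mul_eqn K.+1 d1 (fun i => ((K - i)%N == d2)%:R)); case: ltnP => cmp_d1K.
    by congr (_%:R); apply/eqP/eqP; lia.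
  by rewrite (_ : (K == d1 + d2) = false) //; apply/eqP; lia.
have H_delta : \sum_(i < K.+1) H k (K - i - T2) * (i == d1 :> nat)%:R = H k (K - d1 - T2).
  rewrite (sum_mul_eqn K.+1 d1 (fun i => H k (K - i - T2))); case: ltnP => // lt_K.
  by rewrite (_ : K - d1 - T2 = 0)%N ?Hc_lower0 //; lia.
have delta_H : \sum_(i < K.+1) H j (i - T1) * ((K - i)%N == d2)%:R = H j (K - d2 - T1).
  rewrite (sum_mul_eqn_rev K d2 (fun i => H j (i - T1))); case: leqP => // lt_K.
  by rewrite (_ : K - d2 - T1 = 0)%N ?Hc_lower0 //; lia.
rewrite -delta_delta -delta_H -H_delta -!big_split; apply: eq_bigr => i _ /=.
by rewrite /pcoef_below; ring.
Qed.

Lemma sum_Hc_Hc_low j k T1 T2 K : (K <= T1 + T2)%N ->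
  \sum_(i < K.+1) H j (i - T1) * H k (K - i - T2) = 0.
Proof.
move=> le_KT; apply: big1 => i _; case: (leqP i T1) => [le_iT1|lt_T1i].
  by rewrite Hc_lower_le ?mul0r.
by rewrite [H k _]Hc_lower_le ?mulr0 //; lia.
Qed.

Lemma sum_Hc_Hc_high j k T1 T2 K : (T1 + T2 <= K)%N ->
  \sum_(i < K.+1) H j (i - T1) * H k (K - i - T2) =
    \sum_(1 <= l < K - (T1 + T2)) H k (K - (T1 + T2) - l) * H j l.
Proof.
move=> le_TK; set n := (K - (T1 + T2))%N.
rewrite -(big_mkord xpredT (fun i => H j (i - T1) * H k (K - i - T2))).
rewrite (@big_cat_nat _ _ _ T1.+1) //=; last by lia.
rewrite [X in X + _]big1_seq ?add0r => [|i]; last first.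
  by rewrite mem_index_iota => /andP[_ lt_iT1]; rewrite Hc_lower_le ?mul0r.
rewrite -[T1.+1]/(1 + T1)%N big_addn (@sum_nat_truncate _ 1 n); first last.
- by move=> l le_nl; rewrite [H k _]Hc_lower_le ?mulr0 //; lia.
- by lia.
apply: eq_big_nat => l /andP[le_1l lt_ln]; rewrite mulrC.
by congr (H k _ * H j _); lia.
Qed.

Lemma dKP_ext : dKP F -> forall j k m, (0 < m)%N ->
    H (j + k) m - H j (m + k) - H k (j + m)
    + \sum_(1 <= l < j) H k (j - l) * H l m
    + \sum_(1 <= l < k) H j (k - l) * H l m
    - \sum_(1 <= l < m) H k (m - l) * H j l = 0.
Proof.
move=> F_dKP j k m m_gt0.
have H0_left a b (f : nat -> R) : \sum_(a <= l < b) H 0 (b - l) * f l = 0.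
  by apply: big1 => l _; rewrite Hc_upper0 mul0r.
have H0_right a b (f : nat -> R) : \sum_(a <= l < b) f l * H 0 l = 0.
  by apply: big1 => l _; rewrite Hc_upper0 mulr0.
case: j => [|j]; first by rewrite add0n !Hc_upper0 H0_left H0_right big_geq //; lra.
case: k => [|k]; last exact: F_dKP.
by rewrite !addn0 !Hc_upper0 !H0_left [X in _ + X - _]big_geq //; lra.
Qed.

Lemma sum_struct_const_Hc : dKP F -> forall j k n N, (0 < n)%N -> (j + k < N)%N ->
  \sum_(l < N) struct_const F y j k l * H l n =
    H k (j + n) + H j (n + k) + \sum_(1 <= l < n) H k (n - l) * H j l.
Proof.
move=> F_dKP j k n N n_gt0 lt_jkN.
have trunc c d : (d <= N)%N -> \sum_(l < N) H c (d - l) * H l n =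
    \sum_(1 <= l < d) H c (d - l) * H l n.
  move=> le_dN; rewrite (@sum_ord_truncate _ d N (fun l => H c (d - l) * H l n) le_dN).
    by rewrite (@sum_ord_from1 _ _ (fun l => H c (d - l) * H l n)) // Hc_upper0 mulr0.
  by move=> l le_dl; rewrite Hc_lower_le ?mul0r.
rewrite (eq_bigr (fun l : 'I_N => H l n * (l == j + k :> nat)%:R
    + H k (j - l) * H l n + H j (k - l) * H l n)) => [|l _]; last by rewrite /struct_const; ring.
rewrite !big_split /= (sum_mul_eqn N (j + k) (fun l => H l n)) lt_jkN !trunc; try lia.
by have := dKP_ext F_dKP j k n_gt0; lra.
Qed.

(* p_j p_k = Σ_l C^l_{jk} p_l at z^(T1+T2-K); for K > T1+T2 this is the dKP equation. *)
Lemma pcoef_below_mul : dKP F -> forall j k T1 T2 K, (j <= T1)%N -> (k <= T2)%N ->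
  \sum_(i < K.+1) pcoef_below F y j T1 i * pcoef_below F y k T2 (K - i) =
    \sum_(l < (T1 + T2).+1) struct_const F y j k l * pcoef_below F y l (T1 + T2) K.
Proof.
move=> F_dKP j k T1 T2 K le_jT1 le_kT2; rewrite pcoef_below_mul_expand.
case: (leqP K (T1 + T2)) => [le_KT|lt_TK].
  rewrite sum_Hc_Hc_low // addr0.
  rewrite (eq_bigr (fun l : 'I_(T1 + T2).+1 =>
      struct_const F y j k l * (l == (T1 + T2 - K)%N :> nat)%:R)) => [|l _]; last first.
    rewrite /pcoef_below (_ : K - (T1 + T2) = 0)%N ?Hc_lower0 ?addr0; last by lia.
    by have lt_l := ltn_ord l; congr (_ * _%:R); apply/eqP/eqP; lia.
  rewrite (sum_mul_eqn _ _ (struct_const F y j k)) ifT /struct_const; last by lia.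
  by congr (_%:R + H k _ + H j _); try apply/eqP/eqP; lia.
rewrite sum_Hc_Hc_high; last by lia.
rewrite (_ : (K == _)%N = false) ?add0r; last by apply/eqP; lia.
rewrite (eq_bigr (fun l : 'I_(T1 + T2).+1 => struct_const F y j k l * H l (K - (T1 + T2)))) => [|l _].
  rewrite sum_struct_const_Hc //; try lia.
  by congr (H k _ + H j _ + _); lia.
rewrite /pcoef_below (_ : (K == _)%N = false) ?add0r //.
by apply/eqP; have := ltn_ord l; lia.
Qed.

End BasisProduct.

Section Closure.
Variables (R : realType) (F : xvar R -> R).
Hypothesis F_dKP : dKP F.

Definition mul_coord y (a b : seq R) (l : nat) : R :=
  \sum_(j < size a) \sum_(k < size b) a`_j * b`_k * struct_const F y j k l.

Definition mul_coords y (a b : seq R) : seq R :=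
  mkseq (mul_coord y a b) (size a + size b).+1.

Lemma lco_ser_mul_below y a b K :
  \sum_(i < K.+1) lco (ser F y a) ((size a)%:Z - i%:Z) *
                  lco (ser F y b) ((size b)%:Z - (K - i)%N%:Z) =
  \sum_(l < (size a + size b).+1) mul_coord y a b l * pcoef_below F y l (size a + size b) K.
Proof.
set T := (size a + size b)%N.
transitivity (\sum_(j < size a) \sum_(k < size b) a`_j * b`_k *
   \sum_(i < K.+1) pcoef_below F y j (size a) i * pcoef_below F y k (size b) (K - i)).
  rewrite (eq_bigr (fun i : 'I_K.+1 => \sum_(j < size a) \sum_(k < size b)
      a`_j * b`_k * (pcoef_below F y j (size a) i * pcoef_below F y k (size b) (K - i))))
    => [|i _]; last first.
    rewrite !lco_ser_below // mulr_suml; apply: eq_bigr => j _.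
    by rewrite mulr_sumr; apply: eq_bigr => k _; ring.
  rewrite exchange_big; apply: eq_bigr => j _; rewrite exchange_big.
  by apply: eq_bigr => k _; rewrite mulr_sumr.
transitivity (\sum_(j < size a) \sum_(k < size b) a`_j * b`_k *
   \sum_(l < T.+1) struct_const F y j k l * pcoef_below F y l T K).
  apply: eq_bigr => j _; apply: eq_bigr => k _.
  by rewrite pcoef_below_mul // ltnW.
rewrite (eq_bigr (fun l : 'I_T.+1 => \sum_(j < size a) \sum_(k < size b)
    a`_j * b`_k * (struct_const F y j k l * pcoef_below F y l T K))) => [|l _]; last first.
  rewrite mulr_suml; apply: eq_bigr => j _.
  by rewrite mulr_suml; apply: eq_bigr => k _; ring.
rewrite [RHS]exchange_big; apply: eq_bigr => j _; rewrite [RHS]exchange_big.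
by apply: eq_bigr => k _; rewrite mulr_sumr.
Qed.

Lemma ser_mul y a b : ls_mul (ser F y a) (ser F y b) =~ ser F y (mul_coords y a b).
Proof.
move=> t; set T := (size a + size b)%N.
have [a0 b0] := (ltop_vanishes (ser F y a), ltop_vanishes (ser F y b)).
case: (lerP t T%:Z) => [le_tT|lt_Tt].
  set K := absz (T%:Z - t)%R.
  have e_t : t = (size a)%:Z + (size b)%:Z - K%:Z by rewrite /K gez0_abs; lia.
  rewrite {1}e_t (lco_mul_below _ a0 b0) lco_ser_mul_below.
  have -> : t = T%:Z - K%:Z by rewrite e_t PoszD.
  rewrite lco_ser_below ?size_mkseq //.
  by apply: eq_bigr => l _; rewrite nth_mkseq.
rewrite (vanishes_above_mul a0 b0) //.
case: t lt_Tt => m lt_Tm; last by move: lt_Tm; rewrite NegzE; lia.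
by rewrite /= nth_default // size_mkseq; lia.
Qed.

End Closure.

Section DerivativeAtZero.
Variable R : realType.
Implicit Types (f g : R -> R) (d e : R).

Definition deriv_at0 f d := is_derive (0 : R) (1 : R) f d.

Lemma deriv_at0_val f d : deriv_at0 f d -> derive1 f 0 = d.
Proof. by move=> df; have df' : is_derive (0 : R) (1 : R) f d := df; rewrite derive1E derive_val. Qed.

Lemma deriv_at0_unique f d e : deriv_at0 f d -> deriv_at0 f e -> d = e.
Proof. by move=> df ef; rewrite -(deriv_at0_val df) -(deriv_at0_val ef). Qed.

Lemma eq_deriv_at0 f g d : f =1 g -> deriv_at0 f d -> deriv_at0 g d.
Proof. by move=> /funext ->. Qed.

Lemma deriv_at0_cst c : deriv_at0 (fun _ => c) 0.
Proof. exact: is_derive_cst. Qed.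

Lemma deriv_at0_add f g d e :
  deriv_at0 f d -> deriv_at0 g e -> deriv_at0 (fun s => f s + g s) (d + e).
Proof. by move=> df eg; apply: is_deriveD. Qed.

Lemma deriv_at0_mul f g d e :
  deriv_at0 f d -> deriv_at0 g e -> deriv_at0 (fun s => f s * g s) (f 0 * e + g 0 * d).
Proof. by move=> df eg; have := is_deriveM df eg. Qed.

Lemma deriv_at0_scale c f d : deriv_at0 f d -> deriv_at0 (fun s => c * f s) (c * d).
Proof. by move=> df; have := deriv_at0_mul (deriv_at0_cst c) df; rewrite mulr0 addr0. Qed.

Lemma deriv_at0_sum n (f : 'I_n -> R -> R) (d : 'I_n -> R) :
  (forall i, deriv_at0 (f i) (d i)) ->
  deriv_at0 (fun s => \sum_(i < n) f i s) (\sum_(i < n) d i).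
Proof.
move=> df; have := is_derive_sum df.
by rewrite (_ : \sum_(i < n) f i = fun s => \sum_(i < n) f i s) // funeqE => s; rewrite fct_sumE.
Qed.

End DerivativeAtZero.

Section PartialDerivatives.
Variables (R : realType) (F : xvar R -> R) (x : xvar R).
Hypothesis F_smooth : smooth_F F.

Lemma shift0 : Defs.shift x 0 0 = x.
Proof. by rewrite funeqE => m; rewrite /Defs.shift; case: eqP => // ->; rewrite addr0. Qed.

Lemma pd_cst i (c : R) : pd i (fun _ => c) x = 0.
Proof. by case: i => [|i] //=; exact: deriv_at0_val (deriv_at0_cst c). Qed.

Lemma deriv_at0_pd (h : xvar R -> R) i :
  derivable (fun t : R => h (Defs.shift x i t)) 0 1 ->
  deriv_at0 (fun s => h (Defs.shift x i s)) (pd i.+1 h x).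
Proof. by move=> dh; rewrite /pd derive1E; apply: derivableP. Qed.

Lemma pd_scale i (c : R) (h : xvar R -> R) :
  (forall i', derivable (fun t : R => h (Defs.shift x i' t)) 0 1) ->
  pd i (fun z => c * h z) x = c * pd i h x.
Proof.
case: i => [|i] dh; first by rewrite /= mulr0.
by apply: deriv_at0_val; apply: deriv_at0_scale; exact: deriv_at0_pd.
Qed.

Lemma deriv_at0_Hc j m :
  deriv_at0 (fun s => Hc F j m (Defs.shift x 0 s)) (pd 1 (Hc F j m) x).
Proof.
have dF := deriv_at0_scale (- (m%:R)^-1) (deriv_at0_pd (F_smooth.1 [:: j; m] 0 x)).
suff -> : pd 1 (Hc F j m) x = - (m%:R)^-1 * pd 1 (iter_pd [:: j; m] F) x by [].
by rewrite -(deriv_at0_val dF).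
Qed.

Lemma pd_u k n : pd k (u F n) x = pd 1 (Hc F k n) x.
Proof.
have Hc0 i : Hc F i 0 = fun _ => 0 by rewrite funeqE => z; exact: Hc_lower0.
case: n => [|n]; first by rewrite /u Hc0 !pd_cst.
case: k => [|k].
  by rewrite (_ : Hc F 0 n.+1 = fun _ => 0) ?pd_cst // funeqE => z; exact: Hc_upper0.
rewrite /u /Hc (@pd_scale k.+1 _ (pd 1 (pd n.+1 F))) => [|i].
  rewrite (@pd_scale 1 _ (pd k.+1 (pd n.+1 F))) => [|i]; last exact: (F_smooth.1 [:: k.+1; n.+1]).
  by rewrite (F_smooth.2 [:: n.+1] 1%N k.+1).
exact: (F_smooth.1 [:: 1%N; n.+1]).
Qed.

End PartialDerivatives.

Section LinearExtension.
Variable R : realType.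

Lemma lco_gext (G : nat -> lser R) a t :
  lco (gext G a) t = \sum_(j < size a) a`_j * lco (G j) t.
Proof.
rewrite -(big_mkord xpredT (fun j => a`_j * lco (G j) t)) /gext.
rewrite (_ : iota 0 (size a) = index_iota 0 (size a)); last by rewrite /index_iota subn0.
by elim: (index_iota 0 _) => [|i s IH] /=; rewrite ?big_nil ?big_cons ?IH.
Qed.

Lemma gext_coords (G : nat -> lser R) a b :
  (forall l, a`_l = b`_l) -> gext G a =~ gext G b.
Proof.
move=> ab t; rewrite !lco_gext.
have trunc c : (size c <= size a + size b)%N ->
    \sum_(j < size c) c`_j * lco (G j) t = \sum_(j < size a + size b) c`_j * lco (G j) t.
  move=> le_c; rewrite [RHS](@sum_ord_truncate _ (size c) _ (fun j => c`_j * lco (G j) t)) //.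
  by move=> l le_cl; rewrite nth_default ?mul0r.
by rewrite !trunc ?leq_addr ?leq_addl //; apply: eq_bigr => j _; rewrite ab.
Qed.

End LinearExtension.

Section Coboundary.
Variables (R : realType) (F : xvar R -> R) (x : xvar R).
Hypotheses (F_smooth : smooth_F F) (F_dKP : dKP F).
Local Notation xs s := (Defs.shift x 0 s).

(* The coboundary witness g(p_i) = ∂p_i/∂x_1. *)
Program Definition p_dx1 (i : nat) : lser R :=
  @LSer R 0 (fun t => match t with Negz m => pd 1 (Hc F i m.+1) x | Posz _ => 0 end) _.
Next Obligation. by move=> i [m|m]. Qed.

Lemma lco_p_dx1_below l T K : lco (p_dx1 l) (T%:Z - K%:Z) = pd 1 (Hc F l (K - T)) x.
Proof.
case E: (T%:Z - K%:Z) => [m|m].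
  have -> : Hc F l (K - T) = fun _ => 0 by rewrite funeqE => z; apply: Hc_lower_le; lia.
  by rewrite pd_cst.
have -> : lco (p_dx1 l) (Negz m) = pd 1 (Hc F l m.+1) x by [].
by move: E; rewrite NegzE => E; congr (pd 1 (Hc F l _) x); lia.
Qed.

Lemma gext_p_dx1_vanishes a : vanishes_above (gext p_dx1 a) 0.
Proof.
move=> [m|m] //= m_gt0; rewrite lco_gext big1 // => j _.
by case: m m_gt0 => //= m _; rewrite mulr0.
Qed.

Lemma deriv_pcoef j t : deriv_at0 (fun s => pcoef F (xs s) j t) (lco (p_dx1 j) t).
Proof.
case: t => m; [rewrite -[lco _ _]addr0 | rewrite -[lco _ _]add0r]; apply: deriv_at0_add.
- exact: deriv_at0_cst.
- exact: deriv_at0_cst.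
- exact: deriv_at0_cst.
- exact: deriv_at0_Hc.
Qed.

Lemma deriv_lco_ser a t :
  deriv_at0 (fun s => lco (ser F (xs s) a) t) (lco (gext p_dx1 a) t).
Proof.
rewrite (_ : (fun s => _) = fun s => \sum_(j < size a) a`_j * pcoef F (xs s) j t).
  by rewrite lco_gext; apply: deriv_at0_sum => j; apply: deriv_at0_scale; exact: deriv_pcoef.
by rewrite funeqE => s; rewrite lco_ser.
Qed.

Lemma deriv_pcoef_below l T K :
  deriv_at0 (fun s => pcoef_below F (xs s) l T K) (pd 1 (Hc F l (K - T)) x).
Proof.
rewrite -[pd _ _ _]add0r; apply: deriv_at0_add; first exact: deriv_at0_cst.
exact: deriv_at0_Hc.
Qed.

Lemma nth_psi a b l : (psi F x a b)`_l =
  \sum_(j < size a) \sum_(k < size b) a`_j * b`_k * (psi_basis F x j k)`_l.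
Proof.
rewrite /psi; case: (ltnP l (maxn (size a) (size b))) => [lt_l|le_l]; first by rewrite nth_mkseq.
rewrite nth_default ?size_mkseq //; symmetry; apply: big1 => j _; apply: big1 => k _.
rewrite [(psi_basis _ _ _ _)`_l]nth_default ?mulr0 // /psi_basis size_mkseq.
by have := ltn_ord j; have := ltn_ord k; move: le_l; rewrite !geq_max; lia.
Qed.

Lemma deriv_struct_const j k l :
  deriv_at0 (fun s => struct_const F (xs s) j k l) ((psi_basis F x j k)`_l).
Proof.
have Hc0 i d : (d <= l)%N -> pd 1 (Hc F i (d - l)) x = 0.
  move=> le_dl; rewrite (_ : Hc F i (d - l) = fun _ => 0) ?pd_cst //.
  by rewrite funeqE => z; exact: Hc_lower_le.
have -> : (psi_basis F x j k)`_l = 0 + pd 1 (Hc F k (j - l)) x + pd 1 (Hc F j (k - l)) x.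
  rewrite add0r /psi_basis; case: (ltnP l (maxn j k)) => [lt_l|].
    by rewrite nth_mkseq // !pd_u.
  rewrite geq_max => /andP[le_jl le_kl].
  by rewrite nth_default ?size_mkseq ?geq_max ?le_jl // !Hc0 ?addr0.
apply: deriv_at0_add; first apply: deriv_at0_add.
- exact: deriv_at0_cst.
- exact: deriv_at0_Hc.
- exact: deriv_at0_Hc.
Qed.

Lemma deriv_mul_coord a b l :
  deriv_at0 (fun s => mul_coord F (xs s) a b l) ((psi F x a b)`_l).
Proof.
rewrite nth_psi; apply: deriv_at0_sum => j; apply: deriv_at0_sum => k.
by apply: deriv_at0_scale; exact: deriv_struct_const.
Qed.

Lemma deriv_lco_ser_mul_below a b K :
  \sum_(i < K.+1) (lco (ser F x a) ((size a)%:Z - i%:Z) *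
                      lco (gext p_dx1 b) ((size b)%:Z - (K - i)%N%:Z)
                  + lco (ser F x b) ((size b)%:Z - (K - i)%N%:Z) *
                      lco (gext p_dx1 a) ((size a)%:Z - i%:Z)) =
  \sum_(l < (size a + size b).+1)
    (mul_coord F x a b l * pd 1 (Hc F l (K - (size a + size b))) x
     + pcoef_below F x l (size a + size b) K * (psi F x a b)`_l).
Proof.
have dL := deriv_at0_sum (fun i : 'I_K.+1 => deriv_at0_mul
  (deriv_lco_ser a ((size a)%:Z - i%:Z)) (deriv_lco_ser b ((size b)%:Z - (K - i)%N%:Z))).
have dR := deriv_at0_sum (fun l : 'I_(size a + size b).+1 => deriv_at0_mul
  (deriv_mul_coord a b l) (deriv_pcoef_below l (size a + size b) K)).
have := deriv_at0_unique (eq_deriv_at0 (fun s => lco_ser_mul_below F_dKP (xs s) a b K) dL) dR.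
by rewrite shift0.
Qed.

Lemma lco_gext_mul_coords a b K (T := (size a + size b)%N) :
  lco (gext p_dx1 (mul_coords F x a b)) (T%:Z - K%:Z) =
    \sum_(l < T.+1) mul_coord F x a b l * pd 1 (Hc F l (K - T)) x.
Proof.
by rewrite lco_gext size_mkseq; apply: eq_bigr => l _; rewrite nth_mkseq // lco_p_dx1_below.
Qed.

Lemma lco_ser_psi_below a b K (T := (size a + size b)%N) :
  lco (ser F x (psi F x a b)) (T%:Z - K%:Z) =
    \sum_(l < T.+1) pcoef_below F x l T K * (psi F x a b)`_l.
Proof.
have size_psi : (size (psi F x a b) <= T)%N by rewrite size_mkseq geq_max leq_addr leq_addl.
rewrite lco_ser_below 1?ltnW //.
rewrite [RHS](@sum_ord_truncate _ (size (psi F x a b)) T.+1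
    (fun l => pcoef_below F x l T K * (psi F x a b)`_l)) => [||l le_l].
- by apply: eq_bigr => l _; rewrite mulrC.
- exact: ltnW.
- by rewrite nth_default ?mulr0.
Qed.

Lemma psi_coboundary a b ab : ser F x ab =~ ls_mul (ser F x a) (ser F x b) ->
  ser F x (psi F x a b) =~
    ls_add (ls_add (ls_mul (ser F x a) (gext p_dx1 b)) (ls_mul (ser F x b) (gext p_dx1 a)))
           (ls_opp (gext p_dx1 ab)).
Proof.
move=> hab t; rewrite !lco_add lco_opp.
have -> : lco (gext p_dx1 ab) t = lco (gext p_dx1 (mul_coords F x a b)) t.
  by apply: gext_coords => l; exact: (ls_eq_trans hab (ser_mul F_dKP x a b) (Posz l)).
set T := (size a + size b)%N.
have sa0 : vanishes_above (ser F x a) (size a)%:Z := ltop_vanishes _.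
have sb0 : vanishes_above (ser F x b) (size b)%:Z := ltop_vanishes _.
have [ga0 gb0] := (gext_p_dx1_vanishes a, gext_p_dx1_vanishes b).
have size_psi : (size (psi F x a b) <= T)%N by rewrite size_mkseq geq_max leq_addr leq_addl.
case: (lerP t T%:Z) => [le_tT|lt_Tt]; last first.
  rewrite (vanishes_above_mul sa0 gb0) ?(vanishes_above_mul sb0 ga0) ?gext_p_dx1_vanishes;
    try by rewrite ?addr0; lia.
  by rewrite lser_bnd ?addr0 ?subr0 //=; lia.
set K := absz (T%:Z - t)%R.
have e_t : t = T%:Z - K%:Z by rewrite /K gez0_abs; lia.
have gb0' : vanishes_above (gext p_dx1 b) (size b)%:Z by apply: vanishes_above_le gb0.
have ga0' : vanishes_above (gext p_dx1 a) (size a)%:Z by apply: vanishes_above_le ga0.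
have e_t' : t = (size a)%:Z + (size b)%:Z - K%:Z by rewrite e_t PoszD.
have -> : lco (ls_mul (ser F x a) (gext p_dx1 b)) t =
    \sum_(i < K.+1) lco (ser F x a) ((size a)%:Z - i%:Z) *
                    lco (gext p_dx1 b) ((size b)%:Z - (K - i)%N%:Z).
  by rewrite e_t' (lco_mul_below _ sa0 gb0').
have -> : lco (ls_mul (ser F x b) (gext p_dx1 a)) t =
    \sum_(i < K.+1) lco (ser F x b) ((size b)%:Z - (K - i)%N%:Z) *
                    lco (gext p_dx1 a) ((size a)%:Z - i%:Z).
  by rewrite (ls_mulC _ _ t) e_t' (lco_mul_below _ ga0' sb0); apply: eq_bigr => i _; rewrite mulrC.
rewrite e_t lco_gext_mul_coords lco_ser_psi_below.
have := deriv_lco_ser_mul_below a b K; rewrite !big_split /= => E; lra.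
Qed.

End Coboundary.

Theorem proposition4 (R : realType) (F : xvar R -> R) :
  smooth_F F -> dKP F ->
  forall x : xvar R,
    (forall a b c ab bc : seq R,
        ser F x ab =~ ls_mul (ser F x a) (ser F x b) ->
        ser F x bc =~ ls_mul (ser F x b) (ser F x c) ->
        ls_add (ls_add (ls_add
          (ls_mul (ser F x a) (ser F x (psi F x b c)))
          (ls_opp (ser F x (psi F x ab c))))
          (ser F x (psi F x a bc)))
          (ls_opp (ls_mul (ser F x c) (ser F x (psi F x a b))))
        =~ ls_zero R)
    /\
    (exists G : nat -> lser R,
        forall a b ab : seq R,
          ser F x ab =~ ls_mul (ser F x a) (ser F x b) ->
          ser F x (psi F x a b)
          =~ ls_add (ls_add (ls_mul (ser F x a) (gext G b))
                            (ls_mul (ser F x b) (gext G a)))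
                    (ls_opp (gext G ab))).
Proof.
move=> F_smooth F_dKP x.
have cob a b ab := @psi_coboundary R F x F_smooth F_dKP a b ab.
split; last by exists (p_dx1 F x).
apply: (coboundary_cocycle _ cob) => a b.
by exists (mul_coords F x a b); apply: ls_eq_sym; exact: ser_mul.
Qed.
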